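(* Let $a,b\in\mathbb{R}$ with $0\le a<b$, let $\alpha\in(0,1]$, and let $f:[a,b]\to\mathbb{R}$ be $\alpha$-fractional differentiable. Let $M:=\sup_{t\in(a,b)}|D_\alpha f(t)|$. Then for $t\in[a,b]$, $$ \left|f(t)-\frac{\alpha}{b^\alpha-a^\alpha}\int_a^b f(s)\,d_\alpha s\right|\le\frac{M}{2\alpha(b^\alpha-a^\alpha)}\left[(t^\alpha-a^\alpha)^2+(b^\alpha-t^\alpha)^2\right]. $$ This inequality is sharp in the sense that the right-hand side cannot be replaced by a smaller one.
   Context: The conformable $\alpha$-fractional derivative is $D_\alpha f(t):=\lim_{\varepsilon\to 0}\frac{f(t+\varepsilon t^{1-\alpha})-f(t)}{\varepsilon}$ for $t>0$, $D_\alpha f(0):=\lim_{t\to0^+}D_\alpha f(t)$. Integrals: $\int_a^b h(s)\,d_\alpha s:=\int_a^b h(s)s^{\alpha-1}\,ds$.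
   Formalization: When a = 0, f is moreover right-continuous at 0, so f(t) → f(0) as t → 0⁺, both in the inequality and in the sharpness claim. Apart from conventions, each condition added here is assumed in the paper as well or is needed for the statement above to hold. *)

From Stdlib Require Import Reals.
From Coquelicot Require Import Coquelicot.
Open Scope R_scope.

(* Real power t^x for t >= 0, with the convention 0^x = 0 (used with x > 0). *)
Definition cpow (t x : R) : R := if Rlt_dec 0 t then Rpower t x else 0.

Definition conf_quot (f : R -> R) (alpha t eps : R) : R :=
  (f (t + eps * cpow t (1 - alpha)) - f t) / eps.

(* Df is the conformable alpha-derivative of f on [a,b]:
   - at every t in [a,b] with t > 0, D_alpha f(t) = lim_{eps -> 0} of the
     difference quotient (one-sided at the endpoints: eps restricted so that
     t + eps t^(1-alpha) stays in [a,b]) and equals Df t;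
   - if a = 0, D_alpha f(0) := lim_{t -> 0+} D_alpha f(t) exists and equals Df 0. *)
Definition conf_deriv_on (f Df : R -> R) (alpha a b : R) : Prop :=
  (forall t, a <= t <= b -> 0 < t ->
     filterlim (conf_quot f alpha t)
       (within (fun eps => a <= t + eps * cpow t (1 - alpha) <= b) (locally' 0))
       (locally (Df t))) /\
  (a = 0 -> filterlim Df (at_right 0) (locally (Df 0))).

(* The alpha-integral int_a^b h(s) d_alpha s = int_a^b h(s) s^(alpha-1) ds,
   taken as an (improper at a) Riemann integral; I is its value. *)
Definition is_alpha_integral (h : R -> R) (alpha a b I : R) : Prop :=
  is_RInt_gen (fun s => h s * cpow s (alpha - 1)) (at_right a) (at_point b) I.

Definition is_sup_abs_deriv (Df : R -> R) (a b M : R) : Prop :=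
  is_lub (fun y => exists t, a < t < b /\ y = Rabs (Df t)) M.

Definition ostrowski_rhs (alpha a b M t : R) : R :=
  M / (2 * alpha * (cpow b alpha - cpow a alpha)) *
  ((cpow t alpha - cpow a alpha) ^ 2 + (cpow b alpha - cpow t alpha) ^ 2).

Definition ostrowski_lhs (f : R -> R) (alpha a b I t : R) : R :=
  Rabs (f t - alpha / (cpow b alpha - cpow a alpha) * I).

(* Under the substitution v = s^alpha the conformable calculus becomes the classical one:
   G(v) := f(v^(1/alpha)) has ordinary derivative D_alpha f(v^(1/alpha)) / alpha on
   (a^alpha, b^alpha), so G is (M/alpha)-Lipschitz, and
   int_a^b f(s) d_alpha s = (1/alpha) int_{a^alpha}^{b^alpha} G(v) dv.
   The inequality is then the classical Ostrowski inequality for G at v = t^alpha.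
   Equality holds for f(t) = t^alpha / alpha, i.e. G(v) = v / alpha, at t = a. *)

From Stdlib Require Import Reals Lra.
From Coquelicot Require Import Coquelicot.
Open Scope R_scope.

Lemma ball_R (x y : R) (e : posreal) : ball x e y <-> Rabs (y - x) < e.
Proof. reflexivity. Qed.

Lemma locally_R (x : R) (P : R -> Prop) :
  locally x P <-> exists d, 0 < d /\ forall y, Rabs (y - x) < d -> P y.
Proof.
  split.
  - intros [d Hd]. exists d. split; [apply cond_pos | exact Hd].
  - intros [d [Hd H]]. exists (mkposreal d Hd). exact H.
Qed.

Lemma continuous_R (g : R -> R) (x : R) :
  (forall e, 0 < e -> exists d, 0 < d /\
     forall y, Rabs (y - x) < d -> Rabs (g y - g x) < e) ->
  continuous g x.
Proof.
  intros H. apply filterlim_locally. intros eps. apply locally_R.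
  exact (H eps (cond_pos eps)).
Qed.

Lemma filterlim_within_range {T U : Type} (F : (T -> Prop) -> Prop) {FF : Filter F}
    (G : (U -> Prop) -> Prop) (D : U -> Prop) (g : T -> U) :
  (forall x, D (g x)) -> filterlim g F G -> filterlim g F (within D G).
Proof.
  intros HD Hg P HP. apply Hg in HP. unfold filtermap in *.
  revert HP; apply filter_imp. intros x Hx. exact (Hx (HD x)).
Qed.

Lemma cpow_pos t p : 0 < t -> cpow t p = Rpower t p.
Proof. intros Ht. unfold cpow. destruct (Rlt_dec 0 t); [reflexivity | lra]. Qed.

Lemma cpow_nonpos t p : t <= 0 -> cpow t p = 0.
Proof. intros Ht. unfold cpow. destruct (Rlt_dec 0 t); [lra | reflexivity]. Qed.

Lemma cpow_gt0 t p : 0 < t -> 0 < cpow t p.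
Proof. intros Ht. rewrite cpow_pos by exact Ht. apply exp_pos. Qed.

Lemma cpow_ge0 t p : 0 <= cpow t p.
Proof.
  destruct (Rlt_dec 0 t) as [Ht | Ht].
  - left. apply cpow_gt0, Ht.
  - rewrite cpow_nonpos; lra.
Qed.

Lemma cpow_lt s t p : 0 <= s < t -> 0 < p -> cpow s p < cpow t p.
Proof.
  intros [Hs Hst] Hp. rewrite (cpow_pos t) by lra.
  destruct (Req_dec s 0) as [-> | Hs0].
  - rewrite cpow_nonpos by lra. apply exp_pos.
  - rewrite cpow_pos by lra. apply Rlt_Rpower_l; lra.
Qed.

Lemma cpow_le s t p : 0 <= s <= t -> 0 < p -> cpow s p <= cpow t p.
Proof.
  intros Hst Hp. destruct (Req_dec s t) as [-> | Hne]; [lra |].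
  left. apply cpow_lt; lra.
Qed.

Lemma cpow_cpow_inv t p : 0 <= t -> 0 < p -> cpow (cpow t p) (/ p) = t.
Proof.
  intros Ht Hp. destruct (Req_dec t 0) as [-> | Ht0].
  - rewrite (cpow_nonpos 0) by lra. apply cpow_nonpos; lra.
  - rewrite (cpow_pos t), cpow_pos by (try apply exp_pos; lra).
    rewrite Rpower_mult, Rinv_r, Rpower_1; lra.
Qed.

Lemma is_derive_cpow p x : 0 < x -> is_derive (fun s => cpow s p) x (p * cpow x (p - 1)).
Proof.
  intros Hx. rewrite (cpow_pos x) by exact Hx.
  apply is_derive_ext_loc with (f := fun s => Rpower s p).
  - apply locally_R. exists x. split; [exact Hx |]. intros y Hy.
    apply Rabs_def2 in Hy. rewrite cpow_pos; [reflexivity | lra].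
  - apply is_derive_Reals, derivable_pt_lim_power, Hx.
Qed.

Lemma cpow_continuous_pos p x : 0 < x -> continuous (fun s => cpow s p) x.
Proof.
  intros Hx. apply (@ex_derive_continuous R_AbsRing R_NormedModule).
  eexists. apply is_derive_cpow, Hx.
Qed.

(* Because of the junk value [cpow t p = 0] for [t <= 0], [cpow _ p] is continuous on all of [R]. *)
Lemma cpow_continuous p x : 0 < p -> continuous (fun s => cpow s p) x.
Proof.
  intros Hp. destruct (Rlt_dec 0 x) as [Hx | Hx].
  - apply cpow_continuous_pos, Hx.
  - destruct (Req_dec x 0) as [-> | Hx0].
    + apply continuous_R. intros e He. exists (Rpower e (/ p)). split; [apply exp_pos |].
      intros y Hy. rewrite Rminus_0_r in Hy. rewrite (cpow_nonpos 0), Rminus_0_r by lra.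
      destruct (Rlt_dec 0 y) as [Hy0 | Hy0]; [| rewrite cpow_nonpos, Rabs_R0; lra].
      rewrite Rabs_pos_eq by apply cpow_ge0. rewrite Rabs_pos_eq in Hy by lra.
      rewrite cpow_pos by exact Hy0.
      rewrite <- (Rpower_1 e), <- (Rinv_l p), <- Rpower_mult by lra.
      apply Rlt_Rpower_l; lra.
    + apply continuous_ext_loc with (g := fun _ => 0); [| apply continuous_const].
      apply locally_R. exists (- x). split; [lra |]. intros y Hy.
      apply Rabs_def2 in Hy. rewrite cpow_nonpos; lra.
Qed.

Section ConformableDerivative.

Variables (f Df : R -> R) (alpha a b : R).
Hypothesis Hf : conf_deriv_on f Df alpha a b.

(* Substituting [eps = h / s^(1-alpha)] turns the conformable quotient into the ordinary one. *)
Lemma conf_deriv_quotient s : a <= s <= b -> 0 < s ->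
  forall e, 0 < e -> exists d, 0 < d /\ forall h, h <> 0 -> Rabs h < d -> a <= s + h <= b ->
    Rabs ((f (s + h) - f s) / h - Df s / cpow s (1 - alpha)) < e.
Proof.
  intros Hs Hs0 e He.
  set (c := cpow s (1 - alpha)).
  assert (Hc : 0 < c) by (apply cpow_gt0; exact Hs0).
  destruct Hf as [Hlim _].
  specialize (Hlim s Hs Hs0). rewrite filterlim_locally in Hlim.
  specialize (Hlim (mkposreal (e * c) (Rmult_lt_0_compat _ _ He Hc))).
  apply locally_R in Hlim. destruct Hlim as [d [Hd Hlim]].
  exists (d * c). split; [apply Rmult_lt_0_compat; assumption |].
  intros h Hh Hhd Hsh.
  assert (Hhc : h / c * c = h) by (field; lra).
  assert (Hq : Rabs ((f (s + h) - f s) / (h / c) - Df s) < e * c).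
  { specialize (Hlim (h / c)). unfold conf_quot in Hlim. fold c in Hlim.
    rewrite Hhc in Hlim. apply Hlim.
    - rewrite Rminus_0_r, Rabs_div, (Rabs_pos_eq c) by lra.
      apply Rmult_lt_reg_r with c; [exact Hc |]. field_simplify; lra.
    - intros H0. apply Hh. rewrite <- Hhc, H0. ring.
    - exact Hsh. }
  replace ((f (s + h) - f s) / h - Df s / c)
    with (((f (s + h) - f s) / (h / c) - Df s) / c) by (field; lra).
  rewrite Rabs_div, (Rabs_pos_eq c) by lra.
  apply Rmult_lt_reg_r with c; [exact Hc |]. field_simplify; lra.
Qed.

Hypothesis Ha : 0 <= a.

Lemma conf_deriv_is_derive s : a < s < b -> is_derive f s (Df s / cpow s (1 - alpha)).
Proof.
  intros Hs. apply is_derive_Reals. intros e He.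
  destruct (conf_deriv_quotient s ltac:(lra) ltac:(lra) e He) as [d [Hd Hq]].
  assert (Hd' : 0 < Rmin d (Rmin (s - a) (b - s))) by (repeat apply Rmin_pos; lra).
  exists (mkposreal _ Hd'). intros h Hh Hhd. simpl in Hhd.
  pose proof (Rmin_l d (Rmin (s - a) (b - s))). pose proof (Rmin_r d (Rmin (s - a) (b - s))).
  pose proof (Rmin_l (s - a) (b - s)). pose proof (Rmin_r (s - a) (b - s)).
  apply Hq; [exact Hh | lra |]. apply Rabs_def2 in Hhd. lra.
Qed.

Hypothesis Hf0 : a = 0 -> filterlim f (at_right 0) (locally (f 0)).

Lemma conf_deriv_continuous_within s : a <= s <= b ->
  filterlim f (within (fun x => a <= x <= b) (locally s)) (locally (f s)).
Proof.
  intros Hs. apply filterlim_locally. intros eps. unfold within. apply locally_R.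
  destruct (Req_dec s 0) as [-> | Hs0].
  - specialize (Hf0 ltac:(lra)). rewrite filterlim_locally in Hf0.
    destruct (proj1 (locally_R _ _) (Hf0 eps)) as [d [Hd Hfd]].
    exists d. split; [exact Hd |]. intros y Hy Hyab.
    destruct (Req_dec y 0) as [-> | Hy0]; [apply ball_center |].
    apply Hfd; lra.
  - destruct (conf_deriv_quotient s Hs ltac:(lra) 1 Rlt_0_1) as [d [Hd Hq]].
    set (K := Rabs (Df s / cpow s (1 - alpha)) + 1).
    assert (HK : 0 < K) by (unfold K; pose proof (Rabs_pos (Df s / cpow s (1 - alpha))); lra).
    exists (Rmin d (eps / K)). split; [apply Rmin_pos; [lra | apply Rdiv_lt_0_compat; [apply cond_pos | lra]] |].
    intros y Hy Hyab. apply ball_R.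
    destruct (Req_dec y s) as [-> | Hys]; [rewrite Rminus_diag, Rabs_R0; apply cond_pos |].
    pose proof (Rmin_l d (eps / K)). pose proof (Rmin_r d (eps / K)).
    assert (Hslope : Rabs ((f y - f s) / (y - s)) <= K).
    { specialize (Hq (y - s) ltac:(lra) ltac:(lra)). replace (s + (y - s)) with y in Hq by ring.
      specialize (Hq Hyab).
      pose proof (Rabs_triang_inv ((f y - f s) / (y - s)) (Df s / cpow s (1 - alpha))).
      unfold K. lra. }
    replace (f y - f s) with ((y - s) * ((f y - f s) / (y - s))) by (field; lra).
    rewrite Rabs_mult.
    apply Rle_lt_trans with (Rabs (y - s) * K).
    + apply Rmult_le_compat_l; [apply Rabs_pos | exact Hslope].
    + apply Rmult_lt_reg_r with (/ K); [apply Rinv_0_lt_compat; lra |].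
      rewrite Rmult_assoc, Rinv_r, Rmult_1_r by lra. lra.
Qed.

End ConformableDerivative.

Definition clamp (A B v : R) : R := Rmax A (Rmin B v).

Lemma clamp_mem A B v : A <= B -> A <= clamp A B v <= B.
Proof. intros. unfold clamp, Rmax, Rmin. repeat destruct Rle_dec; lra. Qed.

Lemma clamp_id A B v : A <= v <= B -> clamp A B v = v.
Proof. intros. unfold clamp, Rmax, Rmin. repeat destruct Rle_dec; lra. Qed.

Lemma clamp_continuous A B v : A <= B -> continuous (clamp A B) v.
Proof.
  intros HAB. apply continuous_R. intros e He. exists e. split; [exact He |].
  intros y Hy. eapply Rle_lt_trans; [| exact Hy].
  unfold clamp, Rmax, Rmin. repeat destruct Rle_dec; unfold Rabs; repeat destruct Rcase_abs; lra.
Qed.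

Lemma lipschitz_of_derive_bound (g dg : R -> R) (A B L : R) :
  (forall x, A < x < B -> is_derive g x (dg x)) ->
  (forall x, A < x < B -> Rabs (dg x) <= L) ->
  (forall x, A <= x <= B -> continuous g x) ->
  forall u v, A <= u <= B -> A <= v <= B -> Rabs (g v - g u) <= L * Rabs (v - u).
Proof.
  intros Hd Hb Hc u v Hu Hv.
  destruct (Req_dec u v) as [-> | Huv]; [rewrite !Rminus_diag, Rabs_R0; lra |].
  assert (HL : 0 <= L) by (eapply Rle_trans; [apply Rabs_pos | apply (Hb ((A + B) / 2)); lra]).
  (* [MVT_gen] may return an endpoint, where [dg] is not controlled; use [0] there. *)
  set (dg' x := if Rlt_dec A x then if Rlt_dec x B then dg x else 0 else 0).
  assert (Hmin := Rmin_l u v). assert (Hmin' := Rmin_r u v).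
  assert (Hmax := Rmax_l u v). assert (Hmax' := Rmax_r u v).
  assert (HminA : A <= Rmin u v) by (unfold Rmin; destruct Rle_dec; lra).
  assert (HmaxB : Rmax u v <= B) by (unfold Rmax; destruct Rle_dec; lra).
  destruct (MVT_gen g u v dg') as [c [_ Hmvt]].
  - intros x Hx. unfold dg'.
    destruct (Rlt_dec A x); [| lra]. destruct (Rlt_dec x B); [| lra]. apply Hd; lra.
  - intros x Hx. apply continuity_pt_filterlim, Hc. lra.
  - rewrite Hmvt, Rabs_mult. apply Rmult_le_compat_r; [apply Rabs_pos |].
    unfold dg'. destruct (Rlt_dec A c); [destruct (Rlt_dec c B) |];
      [apply Hb; lra | rewrite Rabs_R0; lra | rewrite Rabs_R0; lra].
Qed.

Lemma is_sup_abs_deriv_bound Df a b M t :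
  is_sup_abs_deriv Df a b M -> a < t < b -> Rabs (Df t) <= M.
Proof. intros [Hub _] Ht. apply Hub. exists t. split; [exact Ht | reflexivity]. Qed.

Section AlphaReparametrization.

Variables (f Df : R -> R) (alpha a b : R).
Hypotheses (Hab : 0 <= a < b) (Halpha : 0 < alpha).

Local Notation A := (cpow a alpha).
Local Notation B := (cpow b alpha).

(* [alpha_root] inverts [s |-> s^alpha] on [[a, b]]; the clamp makes it continuous on all of [R]. *)
Definition alpha_root (v : R) : R := cpow (clamp A B v) (/ alpha).

Definition alpha_reparam (v : R) : R := f (alpha_root v).

Lemma alpha_root_mem v : a <= alpha_root v <= b.
Proof.
  assert (HAB : A < B) by (apply cpow_lt; lra). pose proof (clamp_mem A B v ltac:(lra)) as Hv.
  assert (HA : 0 <= A) by apply cpow_ge0.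
  assert (Hinv : 0 < / alpha) by (apply Rinv_0_lt_compat; lra).
  unfold alpha_root. split.
  - apply Rle_trans with (cpow A (/ alpha)); [rewrite cpow_cpow_inv; lra |].
    apply cpow_le; [lra | exact Hinv].
  - apply Rle_trans with (cpow B (/ alpha)); [| rewrite cpow_cpow_inv; lra].
    apply cpow_le; [lra | exact Hinv].
Qed.

Lemma alpha_root_interior v : A < v < B -> alpha_root v = cpow v (/ alpha) /\ a < cpow v (/ alpha) < b.
Proof.
  intros Hv. assert (HA : 0 <= A) by apply cpow_ge0.
  assert (Hinv : 0 < / alpha) by (apply Rinv_0_lt_compat; lra).
  unfold alpha_root. rewrite clamp_id by lra. split; [reflexivity | split].
  - apply Rle_lt_trans with (cpow A (/ alpha)); [rewrite cpow_cpow_inv; lra |].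
    apply cpow_lt; [lra | exact Hinv].
  - apply Rlt_le_trans with (cpow B (/ alpha)); [| rewrite cpow_cpow_inv; lra].
    apply cpow_lt; [lra | exact Hinv].
Qed.

Lemma alpha_reparam_cpow s : a <= s <= b -> alpha_reparam (cpow s alpha) = f s.
Proof.
  intros Hs. unfold alpha_reparam, alpha_root. rewrite clamp_id.
  - rewrite cpow_cpow_inv; lra.
  - split; apply cpow_le; lra.
Qed.

Lemma alpha_root_continuous v : continuous alpha_root v.
Proof.
  apply (continuous_comp (clamp A B) (fun x => cpow x (/ alpha))).
  - apply clamp_continuous. left. apply cpow_lt; lra.
  - apply cpow_continuous, Rinv_0_lt_compat. exact Halpha.
Qed.

Hypothesis Hf : conf_deriv_on f Df alpha a b.
Hypothesis Hf0 : a = 0 -> filterlim f (at_right 0) (locally (f 0)).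

Lemma alpha_reparam_continuous v : continuous alpha_reparam v.
Proof.
  apply (filterlim_comp _ _ _ alpha_root f _ (within (fun x => a <= x <= b) (locally (alpha_root v)))).
  - apply (filterlim_within_range (locally v)); [apply alpha_root_mem | apply alpha_root_continuous].
  - apply (conf_deriv_continuous_within f Df alpha a b); [exact Hf | lra | exact Hf0 | apply alpha_root_mem].
Qed.

(* The chain rule factor [(1/alpha) v^(1/alpha - 1)] cancels the [s^(1 - alpha)] of the conformable derivative. *)
Lemma alpha_reparam_is_derive v : A < v < B ->
  is_derive alpha_reparam v (Df (cpow v (/ alpha)) / alpha).
Proof.
  intros Hv. destruct (alpha_root_interior v Hv) as [_ Hs].
  assert (HA : 0 <= A) by apply cpow_ge0.
  set (s := cpow v (/ alpha)) in *.
  apply is_derive_ext_loc with (f := fun x => f (cpow x (/ alpha))).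
  { apply locally_R. exists (Rmin (v - A) (B - v)). split; [apply Rmin_pos; lra |].
    intros y Hy. pose proof (Rmin_l (v - A) (B - v)). pose proof (Rmin_r (v - A) (B - v)).
    apply Rabs_def2 in Hy. unfold alpha_reparam.
    rewrite (proj1 (alpha_root_interior y ltac:(lra))). reflexivity. }
  pose proof (is_derive_comp f (fun x => cpow x (/ alpha)) v _ _
    (conf_deriv_is_derive f Df alpha a b Hf ltac:(lra) s Hs) (is_derive_cpow (/ alpha) v ltac:(lra))) as Hchain.
  replace (Df s / alpha) with (scal (/ alpha * cpow v (/ alpha - 1)) (Df s / cpow s (1 - alpha)));
    [exact Hchain |].
  unfold scal; simpl; unfold mult; simpl.
  assert (Hv0 : 0 < v) by lra.
  unfold s. rewrite !cpow_pos by (try apply exp_pos; lra).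
  rewrite Rpower_mult. replace (/ alpha * (1 - alpha)) with (/ alpha - 1) by (field; lra).
  pose proof (exp_pos ((/ alpha - 1) * ln v)). unfold Rpower. field. lra.
Qed.

Lemma alpha_reparam_lipschitz M : is_sup_abs_deriv Df a b M ->
  forall u v, A <= u <= B -> A <= v <= B ->
  Rabs (alpha_reparam v - alpha_reparam u) <= M / alpha * Rabs (v - u).
Proof.
  intros HM.
  apply lipschitz_of_derive_bound with (dg := fun x => Df (cpow x (/ alpha)) / alpha).
  - apply alpha_reparam_is_derive.
  - intros x Hx. unfold Rdiv. rewrite Rabs_mult, Rabs_inv, (Rabs_pos_eq alpha) by lra.
    apply Rmult_le_compat_r; [left; apply Rinv_0_lt_compat; lra |].
    apply (is_sup_abs_deriv_bound Df a b M), alpha_root_interior; assumption.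
  - intros x _. apply alpha_reparam_continuous.
Qed.

Lemma is_RInt_alpha_reparam x : a <= x <= b -> 0 < x ->
  is_RInt (fun s => f s * cpow s (alpha - 1)) x b (/ alpha * RInt alpha_reparam (cpow x alpha) B).
Proof.
  intros Hx Hx0.
  assert (Hdv : forall y, Rmin x b <= y <= Rmax x b ->
    is_derive (fun s => cpow s alpha) y (alpha * cpow y (alpha - 1)) /\
    continuous (fun s => alpha * cpow s (alpha - 1)) y).
  { intros y Hy. rewrite Rmin_left, Rmax_right in Hy by lra. split.
    - apply is_derive_cpow. lra.
    - apply (continuous_scal_r alpha (fun s => cpow s (alpha - 1))), cpow_continuous_pos. lra. }
  pose proof (is_RInt_comp alpha_reparam _ _ x b (fun y _ => alpha_reparam_continuous _) Hdv) as Hsub.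
  apply (is_RInt_scal _ _ _ (/ alpha)) in Hsub.
  eapply is_RInt_ext; [| exact Hsub].
  intros y Hy. rewrite Rmin_left, Rmax_right in Hy by lra.
  unfold scal; simpl; unfold mult; simpl.
  rewrite alpha_reparam_cpow by lra. field. lra.
Qed.

Lemma is_alpha_integral_reparam :
  is_alpha_integral f alpha a b (/ alpha * RInt alpha_reparam A B).
Proof.
  unfold is_alpha_integral, is_RInt_gen.
  apply filterlimi_lim_ext_loc with
    (f := fun p => / alpha * RInt alpha_reparam (cpow (fst p) alpha) B).
  - apply Filter_prod with (Q := fun x => a < x <= b) (R := fun y => y = b).
    + apply locally_R. exists (b - a). split; [lra |]. intros y Hy Hya.
      apply Rabs_def2 in Hy. lra.
    + reflexivity.
    + intros x y Hx ->. simpl. apply is_RInt_alpha_reparam; lra.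
  - apply (filterlim_comp _ _ _ fst (fun x => / alpha * RInt alpha_reparam (cpow x alpha) B) _ (at_right a));
      [apply filterlim_fst |].
    apply (filterlim_filter_le_1 (F := locally a)); [apply filter_le_within |].
    apply (continuous_comp (fun x => cpow x alpha)
             (fun v => / alpha * RInt alpha_reparam v B)).
    + apply cpow_continuous. exact Halpha.
    + apply (continuous_scal_r (/ alpha) (fun v => RInt alpha_reparam v B)).
      apply continuous_RInt_2 with (f := alpha_reparam) (b := B).
      apply filter_forall. intros z.
      apply (@RInt_correct R_CompleteNormedModule), (@ex_RInt_continuous R_CompleteNormedModule).
      intros; apply alpha_reparam_continuous.
Qed.

End AlphaReparametrization.

Lemma abs_RInt_deviation_le (G k : R -> R) (T u v K : R) : u <= v ->
  (forall x, u <= x <= v -> Rabs (G T - G x) <= k x) ->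
  is_RInt k u v K -> ex_RInt G u v ->
  Rabs (G T * (v - u) - RInt G u v) <= K.
Proof.
  intros Huv Hk HK HG.
  assert (Hdev : is_RInt (fun x => G T - G x) u v ((v - u) * G T - RInt G u v)).
  { apply (@is_RInt_minus R_NormedModule).
    - apply (@is_RInt_const R_NormedModule).
    - apply (@RInt_correct R_CompleteNormedModule), HG. }
  replace (G T * (v - u) - RInt G u v) with ((v - u) * G T - RInt G u v) by ring.
  exact (norm_RInt_le (fun x => G T - G x) k u v _ _ Huv Hk Hdev HK).
Qed.

(* The bound is [L] times the mean of [|T - x|] over [[A, B]]. *)
Lemma ostrowski_lipschitz (G : R -> R) (A B L T : R) : A < B ->
  (forall u v, A <= u <= B -> A <= v <= B -> Rabs (G v - G u) <= L * Rabs (v - u)) ->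
  (forall x, A <= x <= B -> continuous G x) -> A <= T <= B ->
  Rabs (G T - RInt G A B / (B - A)) <= L / (2 * (B - A)) * ((T - A) ^ 2 + (B - T) ^ 2).
Proof.
  intros HAB Hlip Hc HT.
  assert (Hex : forall u v, A <= u <= v -> v <= B -> ex_RInt G u v).
  { intros u v Hu Hv. apply (@ex_RInt_continuous R_CompleteNormedModule). intros z Hz.
    rewrite Rmin_left, Rmax_right in Hz by lra. apply Hc. lra. }
  assert (Hleft : Rabs (G T * (T - A) - RInt G A T) <= L * (T - A) ^ 2 / 2).
  { apply abs_RInt_deviation_le with (k := fun x => L * (T - x)); [lra | | | apply Hex; lra].
    - intros x Hx. rewrite <- Rabs_Ropp, Ropp_minus_distr.
      replace (T - x) with (Rabs (x - T)) by (rewrite Rabs_minus_sym; apply Rabs_pos_eq; lra).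
      apply Hlip; lra.
    - replace (L * (T - A) ^ 2 / 2) with (- (L * (T - T) ^ 2 / 2) - - (L * (T - A) ^ 2 / 2)) by field.
      apply (@is_RInt_derive R_CompleteNormedModule (fun x => - (L * (T - x) ^ 2 / 2))).
      + intros y _. auto_derive; [exact I | field].
      + intros y _. apply (@ex_derive_continuous R_AbsRing R_NormedModule). auto_derive. exact I. }
  assert (Hright : Rabs (G T * (B - T) - RInt G T B) <= L * (B - T) ^ 2 / 2).
  { apply abs_RInt_deviation_le with (k := fun x => L * (x - T)); [lra | | | apply Hex; lra].
    - intros x Hx. rewrite <- Rabs_Ropp, Ropp_minus_distr, <- (Rabs_pos_eq (x - T)) by lra.
      apply Hlip; lra.
    - replace (L * (B - T) ^ 2 / 2) with (L * (B - T) ^ 2 / 2 - L * (T - T) ^ 2 / 2) by field.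
      apply (@is_RInt_derive R_CompleteNormedModule (fun x => L * (x - T) ^ 2 / 2)).
      + intros y _. auto_derive; [exact I | field].
      + intros y _. apply (@ex_derive_continuous R_AbsRing R_NormedModule). auto_derive. exact I. }
  assert (Hsplit : RInt G A T + RInt G T B = RInt G A B)
    by (apply (RInt_Chasles G A T B); apply Hex; lra).
  replace (G T - RInt G A B / (B - A))
    with (((G T * (T - A) - RInt G A T) + (G T * (B - T) - RInt G T B)) / (B - A))
    by (rewrite <- Hsplit; field; lra).
  rewrite Rabs_div, (Rabs_pos_eq (B - A)) by lra.
  apply Rmult_le_reg_r with (B - A); [lra |].
  pose proof (Rabs_triang (G T * (T - A) - RInt G A T) (G T * (B - T) - RInt G T B)).
  field_simplify; [| lra | lra]. lra.
Qed.

Lemma conf_deriv_of_is_derive f alpha t d (D : R -> Prop) : 0 < t -> is_derive f t d ->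
  filterlim (conf_quot f alpha t) (within D (locally' 0)) (locally (d * cpow t (1 - alpha))).
Proof.
  intros Ht Hd. apply is_derive_Reals in Hd.
  set (c := cpow t (1 - alpha)). assert (Hc : 0 < c) by (apply cpow_gt0, Ht).
  apply filterlim_locally. intros eps.
  destruct (Hd (eps / c) ltac:(apply Rdiv_lt_0_compat; [apply cond_pos | lra])) as [dl Hdl].
  apply locally_R. exists (dl / c). split; [apply Rdiv_lt_0_compat; [apply cond_pos | lra] |].
  intros e He Hne _. apply ball_R. rewrite Rminus_0_r in He.
  assert (Hq : Rabs ((f (t + e * c) - f t) / (e * c) - d) < eps / c).
  { apply Hdl.
    - apply Rmult_integral_contrapositive_currified; lra.
    - rewrite Rabs_mult, (Rabs_pos_eq c) by lra.
      apply Rmult_lt_reg_r with (/ c); [apply Rinv_0_lt_compat; lra |].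
      rewrite Rmult_assoc, Rinv_r, Rmult_1_r by lra. exact He. }
  unfold conf_quot. fold c.
  replace ((f (t + e * c) - f t) / e - d * c)
    with (c * ((f (t + e * c) - f t) / (e * c) - d)) by (field; lra).
  rewrite Rabs_mult, (Rabs_pos_eq c) by lra.
  apply Rmult_lt_reg_r with (/ c); [apply Rinv_0_lt_compat; lra |].
  replace (c * Rabs ((f (t + e * c) - f t) / (e * c) - d) * / c)
    with (Rabs ((f (t + e * c) - f t) / (e * c) - d)) by (field; lra).
  exact Hq.
Qed.

Section PowerFunction.

Variables (alpha a b : R).
Hypotheses (Hab : 0 <= a < b) (Halpha : 0 < alpha).

Local Notation A := (cpow a alpha).
Local Notation B := (cpow b alpha).

Definition alpha_power (t : R) : R := cpow t alpha / alpha.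

Lemma conf_deriv_on_alpha_power : conf_deriv_on alpha_power (fun _ => 1) alpha a b.
Proof.
  split.
  - intros t _ Ht.
    replace 1 with (/ alpha * (alpha * cpow t (alpha - 1)) * cpow t (1 - alpha)).
    + apply conf_deriv_of_is_derive; [exact Ht |].
      apply (is_derive_ext (fun t => / alpha * cpow t alpha)); [intros s; apply Rmult_comm |].
      apply (is_derive_scal (fun t => cpow t alpha)), is_derive_cpow, Ht.
    + rewrite !cpow_pos, <- Rmult_assoc, Rmult_assoc, <- Rpower_plus by exact Ht.
      replace (alpha - 1 + (1 - alpha)) with 0 by ring. rewrite Rpower_O by exact Ht. field. lra.
  - intros _. apply filterlim_const.
Qed.

Lemma alpha_power_right_continuous :
  filterlim alpha_power (at_right 0) (locally (alpha_power 0)).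
Proof.
  apply (filterlim_filter_le_1 (F := locally 0)); [apply filter_le_within |].
  apply (continuous_ext (fun t => / alpha * cpow t alpha)); [intros s; apply Rmult_comm |].
  apply (continuous_scal_r (/ alpha) (fun t => cpow t alpha)), cpow_continuous, Halpha.
Qed.

Definition alpha_power_alpha_integral : R := (B ^ 2 - A ^ 2) / (2 * alpha ^ 2).

Lemma is_alpha_integral_alpha_power :
  is_alpha_integral alpha_power alpha a b alpha_power_alpha_integral.
Proof.
  assert (HAB : A < B) by (apply cpow_lt; lra).
  assert (HA : 0 <= A) by apply cpow_ge0.
  assert (Hreparam : RInt (alpha_reparam alpha_power alpha a b) A B = (B ^ 2 - A ^ 2) / (2 * alpha)).
  { rewrite (RInt_ext _ (fun v => v / alpha)).
    - apply is_RInt_unique.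
      replace ((B ^ 2 - A ^ 2) / (2 * alpha)) with (B ^ 2 / (2 * alpha) - A ^ 2 / (2 * alpha)) by (field; lra).
      apply (@is_RInt_derive R_CompleteNormedModule (fun v => v ^ 2 / (2 * alpha))).
      + intros y _. auto_derive; [exact I | field; lra].
      + intros y _. apply (@ex_derive_continuous R_AbsRing R_NormedModule). auto_derive. lra.
    - intros v Hv. rewrite Rmin_left, Rmax_right in Hv by lra.
      unfold alpha_reparam, alpha_root, alpha_power. rewrite clamp_id by lra.
      rewrite <- (Rinv_inv alpha) at 2. rewrite cpow_cpow_inv; [reflexivity | lra |].
      apply Rinv_0_lt_compat, Halpha. }
  unfold alpha_power_alpha_integral.
  replace ((B ^ 2 - A ^ 2) / (2 * alpha ^ 2))
    with (/ alpha * RInt (alpha_reparam alpha_power alpha a b) A B) by (rewrite Hreparam; field; lra).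
  apply (is_alpha_integral_reparam alpha_power (fun _ => 1)); [exact Hab | exact Halpha | |].
  - apply conf_deriv_on_alpha_power.
  - intros _. apply alpha_power_right_continuous.
Qed.

Lemma ostrowski_alpha_power_eq :
  ostrowski_lhs alpha_power alpha a b alpha_power_alpha_integral a = ostrowski_rhs alpha a b 1 a.
Proof.
  assert (HAB : A < B) by (apply cpow_lt; lra).
  unfold ostrowski_lhs, ostrowski_rhs, alpha_power_alpha_integral, alpha_power.
  replace (A / alpha - alpha / (B - A) * ((B ^ 2 - A ^ 2) / (2 * alpha ^ 2)))
    with (- ((B - A) / (2 * alpha))) by (field; lra).
  rewrite Rabs_Ropp, Rabs_pos_eq by (apply Rlt_le, Rdiv_lt_0_compat; lra).
  field. lra.
Qed.

End PowerFunction.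

Lemma is_sup_abs_deriv_const a b c : a < b -> 0 <= c -> is_sup_abs_deriv (fun _ => c) a b c.
Proof.
  intros Hab Hc. split.
  - intros y [t [_ ->]]. rewrite Rabs_pos_eq by exact Hc. apply Rle_refl.
  - intros m Hm. apply Hm. exists ((a + b) / 2). split; [lra | rewrite Rabs_pos_eq; lra].
Qed.

Lemma ostrowski_rhs_pos a b alpha M t : 0 <= a < b -> 0 < alpha -> 0 < M ->
  0 < ostrowski_rhs alpha a b M t.
Proof.
  intros Hab Halpha HM. unfold ostrowski_rhs.
  set (A := cpow a alpha). set (B := cpow b alpha). set (T := cpow t alpha).
  assert (HAB : A < B) by (apply cpow_lt; lra).
  apply Rmult_lt_0_compat; [apply Rdiv_lt_0_compat; nra |].
  replace ((T - A) ^ 2 + (B - T) ^ 2) with (((B - A) ^ 2 + (2 * T - A - B) ^ 2) / 2) by field.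
  assert (0 < (B - A) ^ 2) by (apply pow_lt; lra).
  pose proof (pow2_ge_0 (2 * T - A - B)). lra.
Qed.

Lemma ostrowski_conformable (a b alpha : R) (f Df : R -> R) (M : R) :
  0 <= a < b -> 0 < alpha -> conf_deriv_on f Df alpha a b ->
  (a = 0 -> filterlim f (at_right 0) (locally (f 0))) ->
  is_sup_abs_deriv Df a b M ->
  let I := / alpha * RInt (alpha_reparam f alpha a b) (cpow a alpha) (cpow b alpha) in
  is_alpha_integral f alpha a b I /\
  forall t, a <= t <= b -> ostrowski_lhs f alpha a b I t <= ostrowski_rhs alpha a b M t.
Proof.
  intros Hab Halpha Hf Hf0 HM I. split.
  - apply (is_alpha_integral_reparam f Df); assumption.
  - intros t Ht. unfold ostrowski_lhs, ostrowski_rhs, I.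
    assert (HAB : cpow a alpha < cpow b alpha) by (apply cpow_lt; lra).
    rewrite <- (alpha_reparam_cpow f alpha a b Hab Halpha t Ht).
    replace (alpha / (cpow b alpha - cpow a alpha) * (/ alpha * RInt (alpha_reparam f alpha a b) (cpow a alpha) (cpow b alpha)))
      with (RInt (alpha_reparam f alpha a b) (cpow a alpha) (cpow b alpha) / (cpow b alpha - cpow a alpha))
      by (field; lra).
    replace (M / (2 * alpha * (cpow b alpha - cpow a alpha)))
      with (M / alpha / (2 * (cpow b alpha - cpow a alpha))) by (field; lra).
    apply ostrowski_lipschitz; [exact HAB | | |].
    + apply (alpha_reparam_lipschitz f Df); assumption.
    + intros x _. apply (alpha_reparam_continuous f Df); assumption.
    + split; apply cpow_le; lra.
Qed.

Theorem mainTheorem16 (a b alpha : R) (hab : 0 <= a < b) (halpha : 0 < alpha <= 1) :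
  (forall (f Df : R -> R) (M : R),
     conf_deriv_on f Df alpha a b ->
     (a = 0 -> filterlim f (at_right 0) (locally (f 0))) ->
     is_sup_abs_deriv Df a b M ->
     exists I, is_alpha_integral f alpha a b I /\
       forall t, a <= t <= b ->
         ostrowski_lhs f alpha a b I t <= ostrowski_rhs alpha a b M t)
  /\
  (exists (f Df : R -> R) (M I t : R),
     conf_deriv_on f Df alpha a b /\
     (a = 0 -> filterlim f (at_right 0) (locally (f 0))) /\
     is_sup_abs_deriv Df a b M /\
     is_alpha_integral f alpha a b I /\
     a <= t <= b /\
     0 < ostrowski_rhs alpha a b M t /\
     ostrowski_lhs f alpha a b I t = ostrowski_rhs alpha a b M t).
Proof.
  assert (Halpha : 0 < alpha) by lra.
  split.
  - intros f Df M Hf Hf0 HM. eexists. exact (ostrowski_conformable a b alpha f Df M hab Halpha Hf Hf0 HM).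
  - exists (alpha_power alpha), (fun _ => 1), 1, (alpha_power_alpha_integral alpha a b), a.
    refine (conj _ (conj _ (conj _ (conj _ (conj _ (conj _ _)))))).
    + apply conf_deriv_on_alpha_power, Halpha.
    + intros _. apply alpha_power_right_continuous, Halpha.
    + apply is_sup_abs_deriv_const; lra.
    + apply is_alpha_integral_alpha_power; assumption.
    + lra.
    + apply ostrowski_rhs_pos; lra.
    + apply ostrowski_alpha_power_eq; assumption.
Qed.
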